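(* Let $I_1,\dots,I_s$ be squarefree monomial ideals in $S=\mathbb{K}[x_1,\dots,x_n]$, $\mathbb{K}$ a field. Then (a) $\operatorname{sreg}(S/\sum_{i=1}^s I_i)\le\sum_{i=1}^s\operatorname{sreg}(S/I_i)$, and (b) $\operatorname{sreg}(\bigcap_{i=1}^s I_i)\le\sum_{i=1}^s\operatorname{sreg}(I_i)$.
   Context: Stanley regularity: for a finitely generated squarefree $\mathbb{Z}^n$-graded $S$-module $M$ (such as $S/I$ or $I$ for a squarefree monomial ideal $I$), a squarefree Stanley decomposition of $M$ is a decomposition $M=\bigoplus_{i=1}^r u_i\mathbb{K}[Z_i]$ as $\mathbb{K}$-vector spaces, where $Z_i\subseteq\{x_1,\dots,x_n\}$, each $u_i$ is a homogeneous element of squarefree degree with support contained in $Z_i$, and each $u_i\mathbb{K}[Z_i]$ (the $\mathbb{K}$-span of $u_iv$, $v$ a monomial of $\mathbb{K}[Z_i]$) is free over $\mathbb{K}[Z_i]$. Its Stanley regularity is $\max_i\deg(u_i)$, and $\operatorname{sreg}(M)$ is the minimum of this over all such decompositions. *)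

From mathcomp Require Import all_boot.
From Stdlib Require Import ClassicalDescription.
Set Implicit Arguments. Unset Strict Implicit. Unset Printing Implicit Defensive.

Definition expv (n : nat) := 'I_n -> nat.

(* a monomial Z^n-graded module is described by the set of exponents of the
   monomials forming its K-basis *)
Definition monset (n : nat) := expv n -> Prop.

(* indicator vector of a squarefree monomial x^F, F a set of variables *)
Definition chi n (F : {set 'I_n}) : expv n := fun j => (j \in F : nat).

Definition sqf_divides n (F : {set 'I_n}) (a : expv n) : Prop :=
  forall j, chi F j <= a j.

Definition mon_ideal n (G : {set {set 'I_n}}) : monset n :=
  fun a => exists2 F, F \in G & sqf_divides F a.

(* monomial basis of S/I (standard monomials) *)
Definition quot_mon n (I : monset n) : monset n := fun a => ~ I a.

(* sum of the ideals generated by G i: generated by the union of generators *)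
Definition sum_ideal n s (G : 'I_s -> {set {set 'I_n}}) : monset n :=
  mon_ideal (\bigcup_(i < s) G i).

Definition inter_ideal n s (G : 'I_s -> {set {set 'I_n}}) : monset n :=
  fun a => forall i, mon_ideal (G i) a.

(* monomials of the Stanley space x^F K[Z]:  x^F * x^v with supp v in Z *)
Definition in_space n (F Z : {set 'I_n}) (a : expv n) : Prop :=
  exists v : expv n, (forall j, j \notin Z -> v j = 0) /\
                     (forall j, a j = chi F j + v j).

(* a squarefree Stanley decomposition M = (+)_i x^(F_i) K[Z_i]:
   F_i \subset Z_i, each piece is free (no monomial of x^F_i K[Z_i] vanishes
   in M, i.e. all lie in the monomial basis of M), and the pieces give a
   direct sum equal to M (each basis monomial lies in exactly one piece). *)
Definition stanley_dec n (M : monset n) (D : seq ({set 'I_n} * {set 'I_n})) : Prop :=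
  [/\ forall p, p \in D -> p.1 \subset p.2,
      forall p a, p \in D -> in_space p.1 p.2 a -> M a
    & forall a, M a -> exists! i : 'I_(size D),
        in_space (nth (set0, set0) D i).1 (nth (set0, set0) D i).2 a].

Definition dec_sreg n (D : seq ({set 'I_n} * {set 'I_n})) : nat :=
  \max_(p <- D) #|p.1|.

Definition sreg_le n (M : monset n) (r : nat) : Prop :=
  exists2 D, stanley_dec M D & dec_sreg D <= r.

Definition sreg_pred n (M : monset n) : pred nat :=
  fun r => if excluded_middle_informative (sreg_le M r) then true else false.

(* sreg M = minimum over all squarefree Stanley decompositions
   (defaults to 0 if there is none, which never happens for S/I, I) *)
Definition sreg n (M : monset n) : nat :=
  match excluded_middle_informative (exists r, sreg_pred M r) with
  | left h => ex_minn h
  | right _ => 0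
  end.

(* The monomial basis of S/(I_1 + ... + I_s) consists of the monomials lying
   outside every I_i, and that of I_1 ∩ ... ∩ I_s of those lying in every I_i;
   so both modules are intersections of monomial sets, each of which has a
   squarefree Stanley decomposition (group the monomials by their support).
   Two Stanley spaces meet in x^F K[Z] ∩ x^F' K[Z'] = x^(F ∪ F') K[Z ∩ Z']
   (empty unless F ∪ F' ⊆ Z ∩ Z'), so intersecting the pieces of
   decompositions of M and M' pairwise decomposes M ∩ M', with Stanley
   regularity at most sreg M + sreg M' since |F ∪ F'| <= |F| + |F'|. *)
From mathcomp Require Import all_boot.
From Stdlib Require Import ClassicalDescription.
Set Implicit Arguments. Unset Strict Implicit. Unset Printing Implicit Defensive.

Lemma exists_unique_nth_count (T : Type) (x0 : T) (s : seq T) (b : pred T) :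
  (exists! i : 'I_(size s), b (nth x0 s i)) <-> count b s = 1.
Proof.
have -> : count b s = #|[set i : 'I_(size s) | b (nth x0 s i)]|.
  rewrite -sum1_count (big_nth x0) big_mkord -sum1_card.
  by apply: eq_bigl => i; rewrite inE.
split.
- case=> i [bi uniq_i]; apply/eqP/cards1P; exists i; apply/setP=> j.
  by rewrite !inE; apply/idP/eqP => [/uniq_i ->|->].
- move/eqP/cards1P=> [i Ei]; exists i; split; first by have := set11 i; rewrite -Ei inE.
  by move=> j bj; apply/esym/set1P; rewrite -Ei inE.
Qed.

Lemma count_allpairs (T1 T2 T3 : Type) (f : T1 -> T2 -> T3) (c : pred T3)
    (c1 : pred T1) (c2 : pred T2) (s : seq T1) (t : seq T2) :
  (forall x y, c (f x y) = c1 x && c2 y) ->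
  count c [seq f x y | x <- s, y <- t] = count c1 s * count c2 t.
Proof.
move=> cE; elim: s => [//|x s IHs].
rewrite allpairs_cons count_cat IHs count_map mulnDl /=; congr (_ + _).
case c1x: (c1 x); rewrite ?mul1n ?mul0n.
- by apply: eq_count => y /=; rewrite cE c1x.
- by rewrite (eq_count (a2 := pred0)) ?count_pred0 // => y /=; rewrite cE c1x.
Qed.

Section StanleyDecompositions.
Variable n : nat.
Notation piece := ({set 'I_n} * {set 'I_n})%type.

Definition in_spaceb (p : piece) (a : expv n) : bool :=
  [forall j, ((j \in p.1) <= a j) && ((j \notin p.2) ==> (a j == 0))].

Lemma in_spaceP (p : piece) (a : expv n) : p.1 \subset p.2 ->
  in_space p.1 p.2 a <-> in_spaceb p a.
Proof.
move=> /subsetP sub12; split.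
- case=> v [v0 aE]; apply/forallP=> j; rewrite aE /chi leq_addr /=.
  apply/implyP=> jZ; rewrite v0 // addn0.
  by case: (boolP (j \in p.1)) => // /sub12; rewrite (negbTE jZ).
- move=> /forallP a_in; exists (fun j => a j - chi p.1 j); split=> j.
  + by move=> jZ; have /andP[_ /implyP/(_ jZ)/eqP ->] := a_in j.
  + by have /andP[le_a _] := a_in j; rewrite subnKC.
Qed.

(* "In exactly one piece" as a count, which is multiplicative under meet_dec. *)
Definition stanley_dec_count (M : monset n) (D : seq piece) :=
  [/\ forall p, p \in D -> p.1 \subset p.2,
      forall p a, p \in D -> in_spaceb p a -> M a
    & forall a, M a -> count (in_spaceb^~ a) D = 1].

Lemma stanley_decE (M : monset n) (D : seq piece) :
  stanley_dec M D <-> stanley_dec_count M D.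
Proof.
have unique_piece (sub : forall p, p \in D -> p.1 \subset p.2) a :
    (exists! i : 'I_(size D), in_space (nth (set0, set0) D i).1
                                        (nth (set0, set0) D i).2 a)
    <-> count (in_spaceb^~ a) D = 1.
  rewrite -(exists_unique_nth_count (set0, set0)).
  have nthE (i : 'I_(size D)) := in_spaceP a (sub _ (mem_nth (set0, set0) (ltn_ord i))).
  split=> -[i [ai uniq_i]]; exists i; split=> [|j aj];
    by [apply/nthE | apply: uniq_i; apply/nthE].
split=> -[sub space_in unique]; split=> // [p a pD|a Ma].
- by move/(in_spaceP a (sub p pD)); apply: space_in.
- exact/unique_piece/unique.
- by move/(in_spaceP a (sub p pD)); apply: space_in.
- exact/(unique_piece sub)/unique.
Qed.

Lemma stanley_dec_ext (M M' : monset n) (D : seq piece) :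
  (forall a, M a <-> M' a) -> stanley_dec M D -> stanley_dec M' D.
Proof.
move=> MM' [sub space_in unique]; split=> // [p a pD /space_in|a /MM'].
- by move=> /(_ pD) /MM'.
- exact: unique.
Qed.

Lemma sreg_min (M : monset n) (r : nat) : sreg_le M r -> sreg M <= r.
Proof.
move=> Mr; have pred_r : sreg_pred M r.
  by rewrite /sreg_pred; case: excluded_middle_informative.
rewrite /sreg; case: excluded_middle_informative => [ex_r|[]]; last by exists r.
by case: ex_minnP => m _ /(_ r pred_r).
Qed.

Lemma sreg_attained (M : monset n) (D : seq piece) :
  stanley_dec M D -> sreg_le M (sreg M).
Proof.
move=> decD; rewrite /sreg; case: excluded_middle_informative => [ex_r|[]].
  by case: ex_minnP => m; rewrite /sreg_pred; case: excluded_middle_informative.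
exists (dec_sreg D); rewrite /sreg_pred.
by case: excluded_middle_informative => // [[]]; exists D.
Qed.

Definition meet_space (p q : piece) : piece := (p.1 :|: q.1, p.2 :&: q.2).

Lemma in_spaceb_meet (p q : piece) (a : expv n) :
  ((meet_space p q).1 \subset (meet_space p q).2) && in_spaceb (meet_space p q) a
  = in_spaceb p a && in_spaceb q a.
Proof.
rewrite /in_spaceb /meet_space /=; apply/idP/idP.
- case/andP=> _ /forallP a_in; apply/andP; split; apply/forallP => j;
    have /andP[le_a /implyP a0] := a_in j; rewrite !inE in le_a a0;
    apply/andP; split.
  + by case: (j \in p.1) le_a => //; case: (j \in q.1).
  + by apply/implyP=> jZ; apply: a0; rewrite negb_and jZ.
  + by case: (j \in q.1) le_a => //; rewrite orbT.
  + by apply/implyP=> jZ; apply: a0; rewrite negb_and jZ orbT.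
- case/andP=> /forallP a_p /forallP a_q.
  have in_Z j : j \in p.1 :|: q.1 -> j \in p.2 :&: q.2.
    have /andP[le_p /implyP a0p] := a_p j; have /andP[le_q /implyP a0q] := a_q j.
    rewrite !inE => jF; have a_pos : 0 < a j.
      by case/orP: jF => jF; [rewrite jF in le_p | rewrite jF in le_q].
    by apply/andP; split; apply/negPn/negP => /[dup] jZ;
       [move/a0p | move/a0q] => /eqP a0; rewrite a0 in a_pos.
  apply/andP; split; first exact/subsetP.
  apply/forallP=> j; have /andP[le_p /implyP a0p] := a_p j.
  have /andP[le_q /implyP a0q] := a_q j.
  rewrite inE; apply/andP; split.
  + by case: (j \in p.1) le_p; case: (j \in q.1) le_q.
  + by apply/implyP; rewrite inE negb_and => /orP[/a0p|/a0q].
Qed.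

Definition meet_dec (D1 D2 : seq piece) : seq piece :=
  [seq p <- [seq meet_space p q | p <- D1, q <- D2] | (p : piece).1 \subset p.2].

Lemma stanley_dec_meet (M1 M2 : monset n) (D1 D2 : seq piece) :
  stanley_dec M1 D1 -> stanley_dec M2 D2 ->
  stanley_dec (fun a => M1 a /\ M2 a) (meet_dec D1 D2).
Proof.
move=> /stanley_decE[_ in_M1 unique1] /stanley_decE[_ in_M2 unique2].
apply/stanley_decE; split=> [p|p a|a [M1a M2a]].
- by rewrite mem_filter => /andP[].
- rewrite mem_filter => /andP[sub /allpairsP[[p1 p2] [/= p1D p2D pE]]] a_in.
  subst p.
  have /andP[a_p1 a_p2] : in_spaceb p1 a && in_spaceb p2 a.
    by rewrite -in_spaceb_meet sub.
  by split; [apply: (in_M1 p1) | apply: (in_M2 p2)].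
- rewrite count_filter (count_allpairs (c1 := in_spaceb^~ a) (c2 := in_spaceb^~ a)).
    by rewrite unique1 // unique2.
  by move=> p q /=; rewrite andbC -in_spaceb_meet.
Qed.

Lemma dec_sreg_meet (D1 D2 : seq piece) :
  dec_sreg (meet_dec D1 D2) <= dec_sreg D1 + dec_sreg D2.
Proof.
apply/bigmax_leqP_seq => p.
rewrite mem_filter => /andP[_ /allpairsP[[p1 p2] [/= p1D p2D ->]]] _.
have le_sreg (D : seq piece) q : q \in D -> #|q.1| <= dec_sreg D.
  by move=> qD; rewrite /dec_sreg (big_rem _ qD) /= leq_maxl.
rewrite cardsU; apply: leq_trans (leq_subr _ _) _.
by apply: leq_add; apply: le_sreg.
Qed.

Definition supp (a : expv n) : {set 'I_n} := [set j | 0 < a j].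

Lemma in_spaceb_diag (X : {set 'I_n}) (a : expv n) :
  in_spaceb (X, X) a = (supp a == X).
Proof.
rewrite /in_spaceb /=; apply/forallP/eqP => [a_in|<- j].
- apply/setP=> j; rewrite inE; have /andP[le_a /implyP a0] := a_in j.
  case: (boolP (j \in X)) => jX; last by rewrite (eqP (a0 jX)).
  by rewrite lt0n; move: le_a; rewrite jX; case: (a j).
- by rewrite !inE; case: (a j).
Qed.

(* The pieces x^X K[X] partition S by support. *)
Lemma supp_stanley_dec (M : monset n) (P : pred {set 'I_n}) :
  (forall a, M a <-> P (supp a)) ->
  stanley_dec M [seq (X, X) | X <- enum {set 'I_n} & P X].
Proof.
move=> ME; apply/stanley_decE; split=> [p|p a|a /ME Pa].
- by move=> /mapP[X _ ->].
- case/mapP=> X; rewrite mem_filter => /andP[PX _] ->.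
  by rewrite in_spaceb_diag => /eqP suppE; apply/ME; rewrite suppE.
- rewrite count_map count_filter (eq_count (a2 := pred1 (supp a))).
    by rewrite count_uniq_mem ?enum_uniq // mem_enum.
  move=> X /=; rewrite in_spaceb_diag eq_sym.
  by case: eqVneq => [->|]; rewrite ?Pa.
Qed.

Lemma sreg_le_bigcap (I : eqType) (M : I -> monset n) (r : seq I) :
  (forall i, exists D, stanley_dec (M i) D) ->
  sreg_le (fun a => forall i, i \in r -> M i a) (\sum_(i <- r) sreg (M i)).
Proof.
move=> decM; elim: r => [|i r [D2 decD2 le_D2]].
  rewrite big_nil; exists [:: (set0, setT)]; last first.
    by rewrite /dec_sreg big_seq1 cards0.
  apply/stanley_decE; split=> // [p|a _].
    by rewrite inE => /eqP ->; apply: subsetT.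
  by rewrite /= (_ : in_spaceb _ a) //; apply/forallP => j; rewrite inE in_setT.
rewrite big_cons; have [D0 /sreg_attained[D1 decD1 le_D1]] := decM i.
exists (meet_dec D1 D2); last exact: leq_trans (dec_sreg_meet _ _) (leq_add _ _).
apply: stanley_dec_ext (stanley_dec_meet decD1 decD2) => a.
split=> [[Mia Mra] j|Ma]; first by rewrite inE => /orP[/eqP ->|/Mra].
by split=> [|j jr]; apply: Ma; rewrite ?mem_head // inE jr orbT.
Qed.

Lemma mon_idealE (G : {set {set 'I_n}}) (a : expv n) :
  mon_ideal G a <-> [exists F in G, F \subset supp a].
Proof.
have sqf_dividesE (F : {set 'I_n}) : sqf_divides F a <-> F \subset supp a.
  split=> [div_a|/subsetP sub j]; rewrite /chi.
    by apply/subsetP => j jF; have := div_a j; rewrite /chi jF inE.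
  by case: (boolP (j \in F)) => // /sub; rewrite inE.
split=> [[F FG /sqf_dividesE sub]|/existsP[F /andP[FG /sqf_dividesE div_a]]].
  by apply/existsP; exists F; rewrite FG.
by exists F.
Qed.

Lemma mon_ideal_stanley_dec (G : {set {set 'I_n}}) :
  exists D, stanley_dec (mon_ideal G) D.
Proof.
eexists; apply: (supp_stanley_dec (P := fun X => [exists F in G, F \subset X])).
exact: mon_idealE.
Qed.

Lemma quot_mon_ideal_stanley_dec (G : {set {set 'I_n}}) :
  exists D, stanley_dec (quot_mon (mon_ideal G)) D.
Proof.
eexists; apply: (supp_stanley_dec (P := fun X => ~~ [exists F in G, F \subset X])).
by move=> a; rewrite /quot_mon mon_idealE; split=> [/negP|/negP].
Qed.

Lemma sreg_le_bigcap_ord (s : nat) (M : 'I_s -> monset n) (M' : monset n) :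
  (forall i, exists D, stanley_dec (M i) D) ->
  (forall a, (forall i, M i a) <-> M' a) ->
  sreg M' <= \sum_(i < s) sreg (M i).
Proof.
move=> decM ME; have [D decD le_D] := sreg_le_bigcap (enum 'I_s) decM.
rewrite big_enum in le_D; apply: sreg_min; exists D => //.
apply: stanley_dec_ext decD => a; rewrite -ME.
by split=> Ma i; [apply: Ma; rewrite mem_enum | move=> _; apply: Ma].
Qed.

Lemma sum_idealE (s : nat) (G : 'I_s -> {set {set 'I_n}}) (a : expv n) :
  sum_ideal G a <-> exists i, mon_ideal (G i) a.
Proof.
rewrite /sum_ideal mon_idealE; split.
  case/existsP=> F /andP[/bigcupP[i _ FG] sub]; exists i.
  by apply/mon_idealE/existsP; exists F; rewrite FG.
case=> i /mon_idealE/existsP[F /andP[FG sub]]; apply/existsP; exists F.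
by rewrite sub andbT; apply/bigcupP; exists i.
Qed.

Lemma sreg_quot_sum_ideal (s : nat) (G : 'I_s -> {set {set 'I_n}}) :
  sreg (quot_mon (sum_ideal G)) <= \sum_(i < s) sreg (quot_mon (mon_ideal (G i))).
Proof.
apply: sreg_le_bigcap_ord => [i|a]; first exact: quot_mon_ideal_stanley_dec.
rewrite /quot_mon sum_idealE; split=> [not_in [i Gia]|not_in i Gia].
  exact: not_in Gia.
by apply: not_in; exists i.
Qed.

Lemma sreg_inter_ideal (s : nat) (G : 'I_s -> {set {set 'I_n}}) :
  sreg (inter_ideal G) <= \sum_(i < s) sreg (mon_ideal (G i)).
Proof. by apply: sreg_le_bigcap_ord => [i|//]; apply: mon_ideal_stanley_dec. Qed.

End StanleyDecompositions.

Theorem lemma5p2 (n s : nat) (G : 'I_s -> {set {set 'I_n}}) :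
  sreg (quot_mon (sum_ideal G)) <= \sum_(i < s) sreg (quot_mon (mon_ideal (G i)))
  /\ sreg (inter_ideal G) <= \sum_(i < s) sreg (mon_ideal (G i)).
Proof. by split; [apply: sreg_quot_sum_ideal | apply: sreg_inter_ideal]. Qed.
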